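(* Let $E=\{e_1,\ldots,e_m\}$ be finite, $X_1,\ldots,X_n$ fuzzy subsets of $E$, and $\Phi_1,\ldots,\Phi_K$ Boolean combinations, $\Phi_j(Y_1,\ldots,Y_n)=Y_1^{(l_{j,1})}\cap\cdots\cap Y_n^{(l_{j,n})}$. Define the probability function on $\{0,\ldots,m\}^K$ $$f(i_1,\ldots,i_K)=\sum_{\substack{Y_1,\ldots,Y_n\in\mathcal{P}(E):\\ |\Phi_1(Y_1,\ldots,Y_n)|=i_1,\ldots,|\Phi_K(Y_1,\ldots,Y_n)|=i_K}} m_{X_1}(Y_1)\cdots m_{X_n}(Y_n).$$ Then for each $j\in\{1,\ldots,K\}$, the $j$-th marginal (projection) of $f$ is a Poisson binomial distribution with parameters $p^j_s=\mu_{X_1^{(l_{j,1})}\tilde\cap\cdots\tilde\cap X_n^{(l_{j,n})}}(e_s)$, $s=1,\ldots,m$, i.e. $p^j_s=\prod_{r=1}^n \mu_{X_r^{(l_{j,r})}}(e_s)$.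
   Context: For a fuzzy set $X$ on $E$ with membership $\mu_X:E\to[0,1]$ and crisp $Y\subseteq E$, $m_X(Y)=\prod_{e\in Y}\mu_X(e)\prod_{e\in E\setminus Y}(1-\mu_X(e))$. For crisp sets $Y^{(1)}=Y$, $Y^{(0)}=E\setminus Y$; for fuzzy sets $X^{(1)}=X$, $X^{(0)}=\tilde\neg X$ with $\mu_{\tilde\neg X}(e)=1-\mu_X(e)$, and $\tilde\cap$ is the pointwise product t-norm. The Poisson binomial distribution with parameters $p_1,\ldots,p_m$ is the distribution of the number of successes in $m$ independent Bernoulli trials with success probabilities $p_1,\ldots,p_m$: $\Pr(K=k)=\sum_{A\subseteq\{1,\ldots,m\},|A|=k}\prod_{i\in A}p_i\prod_{i\notin A}(1-p_i)$. *)

From mathcomp Require Import all_boot all_order all_algebra.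
Set Implicit Arguments. Unset Strict Implicit. Unset Printing Implicit Defensive.
Import Order.TTheory GRing.Theory Num.Theory.
Local Open Scope ring_scope.

Section Fuzzy.
Variables (R : realFieldType) (E : finType).

Definition fuzzy := E -> R.

Definition is_fuzzy (X : fuzzy) := forall e, 0 <= X e <= 1.

Definition mX (X : fuzzy) (Y : {set E}) : R :=
  \prod_(e in Y) X e * \prod_(e in ~: Y) (1 - X e).

Definition cpow (Y : {set E}) (b : bool) : {set E} := if b then Y else ~: Y.

Definition fneg (X : fuzzy) : fuzzy := fun e => 1 - X e.
Definition fpow (X : fuzzy) (b : bool) : fuzzy := if b then X else fneg X.

Definition fcap (X Y : fuzzy) : fuzzy := fun e => X e * Y e.
Definition fone : fuzzy := fun _ => 1.

Definition Phi (n : nat) (l : 'I_n -> bool) (Y : 'I_n -> {set E}) : {set E} :=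
  \bigcap_(r < n) cpow (Y r) (l r).

Definition fPhi (n : nat) (l : 'I_n -> bool) (X : 'I_n -> fuzzy) : fuzzy :=
  foldr fcap fone [seq fpow (X r) (l r) | r <- enum 'I_n].

Definition fjoint (n K : nat) (X : 'I_n -> fuzzy) (l : 'I_K -> 'I_n -> bool)
    (i : {ffun 'I_K -> 'I_#|E|.+1}) : R :=
  \sum_(Y : {ffun 'I_n -> {set E}} | [forall j, #|Phi (l j) Y| == val (i j)])
     \prod_(r < n) mX (X r) (Y r).

Definition marginal (n K : nat) (X : 'I_n -> fuzzy) (l : 'I_K -> 'I_n -> bool)
    (j : 'I_K) (k : 'I_#|E|.+1) : R :=
  \sum_(i : {ffun 'I_K -> 'I_#|E|.+1} | i j == k) fjoint X l i.

Definition poisson_binomial (p : E -> R) (k : nat) : R :=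
  \sum_(A : {set E} | #|A| == k) (\prod_(e in A) p e * \prod_(e in ~: A) (1 - p e)).

End Fuzzy.

From mathcomp Require Import all_boot all_order all_algebra.
Import Order.TTheory GRing.Theory Num.Theory.
Local Open Scope ring_scope.

(* Under the weight \prod_r m_{X_r}(Y_r) the memberships [e \in Y_r] are
   independent over all pairs (e, r).  Grouping them by e, the membership
   patterns (e \in Y_r)_r are independent over e, and e lies in
   Phi_j(Y) = \bigcap_r Y_r^(l_{j,r}) exactly when its pattern is l_j, which
   has weight p^j_e = \prod_r mu_{X_r^(l_{j,r})}(e).  So Phi_j(Y) is the random
   set with weight m_{p^j}, and the j-th marginal is the law of its
   cardinality: the Poisson binomial distribution with parameters p^j. *)

Lemma sum_prod_preimset1 (R : comPzRingType) (I T : finType) (w : I -> T -> R)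
    (t0 : T) (A : {set I}) :
    (forall i, \sum_t w i t = 1) ->
  \sum_(F : {ffun I -> T} | [set i | F i == t0] == A) \prod_i w i (F i)
  = \prod_i (if i \in A then w i t0 else 1 - w i t0).
Proof.
move=> w_sum1.
transitivity (\prod_i \sum_(t | (t == t0) == (i \in A)) w i t).
  rewrite bigA_distr_big_dep; apply: eq_bigl => F.
  apply/eqP/familyP => [<- i|FA]; first by rewrite -topredE /= inE.
  by apply/setP => i; have := FA i; rewrite -topredE inE => /eqP.
apply: eq_bigr => i _; case: (i \in A).
  by rewrite (eq_bigl (pred1 t0)) ?big_pred1_eq // => t; rewrite eqb_id.
rewrite -(w_sum1 i) [in RHS](bigD1 t0) //= addrC addrK.
by apply: eq_bigl => t; rewrite eqbF_neg.
Qed.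

Section FuzzyProducts.
Variables (R : realFieldType) (E : finType).

Lemma mX_fpow (X : fuzzy R E) (Y : {set E}) :
  mX X Y = \prod_e fpow X (e \in Y) e.
Proof.
rewrite /mX [RHS](bigID (mem Y)) /=; congr (_ * _).
  by apply: eq_bigr => e ->.
by apply: eq_big => e; rewrite ?inE // => /negPf ->.
Qed.

Lemma sum_fpow (X : fuzzy R E) (e : E) : \sum_b fpow X b e = 1.
Proof. by rewrite big_bool /= /fneg addrC subrK. Qed.

Lemma fPhi_prod (n : nat) (L : 'I_n -> bool) (X : 'I_n -> fuzzy R E) (e : E) :
  fPhi L X e = \prod_r fpow (X r) (L r) e.
Proof.
rewrite /fPhi -[RHS]big_enum /=.
by elim: (enum _) => [|r s IH]; rewrite ?big_nil ?big_cons //= /fcap IH.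
Qed.

Variables (n : nat) (L : 'I_n -> bool) (X : 'I_n -> fuzzy R E).

Definition sets_of_pattern (F : {ffun E -> {ffun 'I_n -> bool}}) :
  {ffun 'I_n -> {set E}} := [ffun r => [set e | F e r]].

Lemma sets_of_pattern_bij : bijective sets_of_pattern.
Proof.
exists (fun Y : {ffun 'I_n -> {set E}} => [ffun e => [ffun r => e \in Y r]]).
  by move=> F; apply/ffunP => e; apply/ffunP => r; rewrite !ffunE inE.
by move=> Y; apply/ffunP => r; apply/setP => e; rewrite !ffunE inE !ffunE.
Qed.

Lemma Phi_sets_of_pattern F :
  Phi L (sets_of_pattern F) = [set e | F e == [ffun r => L r]].
Proof.
apply/setP => e; rewrite inE; apply/bigcapP/eqP => [Fe_L|Fe_L r _].
  apply/ffunP => r; have := Fe_L r isT; rewrite !ffunE /cpow.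
  by case: (L r); rewrite ?inE // => /negPf.
have Fer : F e r = L r by rewrite Fe_L ffunE.
by rewrite /cpow ffunE; case: (L r) Fer => Fer; rewrite !inE Fer.
Qed.

Lemma prod_mX_sets_of_pattern F :
  \prod_r mX (X r) (sets_of_pattern F r) = \prod_e \prod_r fpow (X r) (F e r) e.
Proof.
under eq_bigr do rewrite mX_fpow.
rewrite exchange_big; apply: eq_bigr => e _; apply: eq_bigr => r _.
by rewrite ffunE inE.
Qed.

Lemma sum_mX_Phi (A : {set E}) :
  \sum_(Y : {ffun 'I_n -> {set E}} | Phi L Y == A) \prod_r mX (X r) (Y r)
  = mX (fPhi L X) A.
Proof.
rewrite (reindex sets_of_pattern); last exact: onW_bij sets_of_pattern_bij.
under eq_bigl do rewrite Phi_sets_of_pattern.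
under eq_bigr do rewrite prod_mX_sets_of_pattern.
pose w e (b : {ffun 'I_n -> bool}) := \prod_r fpow (X r) (b r) e.
rewrite (@sum_prod_preimset1 _ _ _ w) => [|e]; last first.
  rewrite -(bigA_distr_bigA (fun r b => fpow (X r) b e)).
  by apply: big1 => r _; apply: sum_fpow.
rewrite mX_fpow; apply: eq_bigr => e _.
suff -> : w e [ffun r => L r] = fPhi L X e by case: (e \in A).
by rewrite fPhi_prod; apply: eq_bigr => r _; rewrite ffunE.
Qed.

End FuzzyProducts.

Section Marginal.
Variables (R : realFieldType) (E : finType) (n K : nat).
Variables (X : 'I_n -> fuzzy R E) (l : 'I_K -> 'I_n -> bool).

Definition card_profile (Y : {ffun 'I_n -> {set E}}) :
  {ffun 'I_K -> 'I_#|E|.+1} := [ffun j => inord #|Phi (l j) Y|].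

Lemma card_profileE Y j : card_profile Y j = #|Phi (l j) Y| :> nat.
Proof. by rewrite ffunE inordK // ltnS max_card. Qed.

Lemma fjointE i :
  fjoint X l i = \sum_(Y | card_profile Y == i) \prod_r mX (X r) (Y r).
Proof.
apply: eq_bigl => Y; apply/forallP/eqP => [Y_i|<- j].
  by apply/ffunP => j; apply: val_inj; rewrite /= card_profileE (eqP (Y_i j)).
by rewrite /= card_profileE.
Qed.

Lemma marginalE j k :
  marginal X l j k =
  \sum_(Y : {ffun 'I_n -> {set E}} | #|Phi (l j) Y| == k) \prod_r mX (X r) (Y r).
Proof.
rewrite [RHS](partition_big card_profile (fun i => i j == k)) => [|Y Y_k].
  apply: eq_bigr => i /eqP i_j; rewrite fjointE; apply: eq_bigl => Y.
  case: (card_profile Y =P i) => [Y_i|]; rewrite ?andbT ?andbF //.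
  by rewrite -i_j -Y_i card_profileE eqxx.
by apply/eqP/val_inj; rewrite /= card_profileE (eqP Y_k).
Qed.

End Marginal.

Theorem theorem2 (R : realFieldType) (E : finType) (n K : nat)
    (X : 'I_n -> fuzzy R E) (hX : forall r, is_fuzzy (X r))
    (l : 'I_K -> 'I_n -> bool) (j : 'I_K) (k : 'I_#|E|.+1) :
  marginal X l j k = poisson_binomial (fPhi (l j) X) k.
Proof.
rewrite marginalE (partition_big (fun Y : {ffun 'I_n -> {set E}} => Phi (l j) Y)
  (fun A => #|A| == k)) //.
apply: eq_bigr => A cardA; rewrite -[RHS]/(mX (fPhi (l j) X) A) -sum_mX_Phi.
apply: eq_bigl => Y.
by case: (Phi (l j) Y =P A) => [->|]; rewrite ?cardA ?andbF.
Qed.
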